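(* There is an absolute constant $C > 0$ such that for every $L \geq 1$, $m \geq 1$, $k^* \in [m]$ and every ordered pair $(\tau, \tilde\tau)$ of states in $[m]^{L+1}$, the number of triples $(\lambda, i, k) \in [m]^{L+1}\times\{0,\ldots,L\}\times[m]$ such that $(\tau,\tilde\tau)$ occurs as a pair of consecutive states of the path $\gamma_{\lambda,\lambda_{[i,k]}}$ is at most $C m^2 (L+1)^{1 + \log_2 3}$.
   Context: States are $\lambda = (\lambda_0,\ldots,\lambda_L) \in [m]^{L+1}$; coordinate $\ell$ is level $\ell$. $\lambda_{[i,k]}$ is $\lambda$ with the level-$i$ entry replaced by $k$. The procedure $\mathbf{Swap}(a,b)$ ($0\le a\le b\le L$): if $b - a \leq 1$, perform the single elementary operation exchanging the entries at levels $a$ and $b$; otherwise with $h = \lfloor (a+b)/2 \rfloor$ perform $\mathbf{Swap}(a,h)$, then $\mathbf{Swap}(h,b)$, then $\mathbf{Swap}(a,h)$. The path $\gamma_{\lambda,\lambda_{[i,k]}}$ (with $k^*$ a fixed element of $[m]$) starts at $\lambda$ and performs in order: (1) set the level-0 entry to $k^*$; (2) $\mathbf{Swap}(0,i)$; (3) set the level-0 entry to $k$; (4) $\mathbf{Swap}(0,i)$; (5) set the level-0 entry to $\lambda_0$. The path is the sequence of states consisting of $\lambda$ followed by the state after each elementary operation; a pair of consecutive states is (state before, state after) one elementary operation. *)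

From mathcomp Require Import all_boot.
From Stdlib Require Import Reals.
Set Implicit Arguments. Unset Strict Implicit. Unset Printing Implicit Defensive.

(* States lambda = (lambda_0,...,lambda_L) in [m]^{L+1}; [m] is encoded as 'I_m
   (values 0..m-1 instead of 1..m), levels as 'I_L.+1. *)
Definition state (L m : nat) := {ffun 'I_L.+1 -> 'I_m}.

Inductive elop (m : nat) :=
| SetZero of 'I_m
| Exch of nat & nat.

Definition exch_state L m (a b : nat) (s : state L m) : state L m :=
  [ffun j : 'I_L.+1 => if j == inord a then s (inord b)
                       else if j == inord b then s (inord a) else s j].

Definition set0_state L m (k : 'I_m) (s : state L m) : state L m :=
  [ffun j : 'I_L.+1 => if j == ord0 then k else s j].

Definition apply_op L m (s : state L m) (o : elop m) : state L m :=
  match o with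
  | SetZero k => set0_state k s
  | Exch a b => exch_state a b s
  end.

(* Swap(a,b) as the list of pairs of levels exchanged by its elementary
   operations, in order.  [fuel] only ensures structural recursion; with
   fuel >= b - a + 1 it never runs out. *)
Fixpoint swap_pairs (fuel a b : nat) : seq (nat * nat) :=
  match fuel with
  | 0 => [::]
  | fuel'.+1 =>
      if b - a <= 1 then [:: (a, b)]
      else let h := (a + b)./2 in
           swap_pairs fuel' a h ++ swap_pairs fuel' h b ++ swap_pairs fuel' a h
  end.

Definition Swap_ops m (a b : nat) : seq (elop m) :=
  [seq Exch m p.1 p.2 | p <- swap_pairs (b - a).+1 a b].

Definition gamma_ops L m (kstar : 'I_m) (lam : state L m) (i : 'I_L.+1) (k : 'I_m)
  : seq (elop m) :=
  [:: SetZero kstar] ++ Swap_ops m 0 i ++ [:: SetZero k] ++ Swap_ops m 0 i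
  ++ [:: SetZero (lam ord0)].

Definition gamma_path L m (kstar : 'I_m) (lam : state L m) (i : 'I_L.+1) (k : 'I_m)
  : seq (state L m) :=
  lam :: scanl (@apply_op L m) lam (gamma_ops kstar lam i k).

Definition occurs_consecutiveb (T : eqType) (tau tau' : T) (p : seq T) : bool :=
  (tau, tau') \in zip p (behead p).

Definition triples_through L m (kstar : 'I_m) (tau tau' : state L m)
  : {set (state L m * 'I_L.+1 * 'I_m)} :=
  [set t | occurs_consecutiveb tau tau' (gamma_path kstar t.1.1 t.1.2 t.2)].

From mathcomp Require Import all_boot zify.

Set Implicit Arguments.
Unset Strict Implicit.
Unset Printing Implicit Defensive.

(* Every elementary operation is injective except [SetZero], which forgets
   only the level-0 entry.  Hence a prefix of length t of the path of
   (lambda, i, k) that ends in tau determines (lambda, k) once i, t and two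
   entries of [m] are known: lambda_0, and either k (not yet used by the
   prefix) or the level-0 entry overwritten by [SetZero k].  As Swap(0, i)
   performs at most 3^K exchanges when i <= 2^K, t ranges over
   O(3^(log2 L)) = O((L+1)^(log2 3)) values, and i over L+1 values. *)

Definition op_shape {m} (o : elop m) : option (nat * nat) :=
  if o is Exch a b then Some (a, b) else None.

Section Runs.

Variables L m : nat.
Implicit Types (s : state L m) (ops : seq (elop m)).

Definition run s ops : state L m := foldl (@apply_op L m) s ops.

Fixpoint forgotten s ops : seq 'I_m :=
  if ops is o :: ops' then
    let rest := forgotten (apply_op s o) ops' in
    if o is SetZero _ then s ord0 :: rest else rest
  else [::].

Lemma exch_stateK a b : involutive (@exch_state L m a b).
Proof.
move=> s; apply/ffunP=> j; rewrite !ffunE.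
set A := (inord a : 'I_L.+1); set B := (inord b : 'I_L.+1).
case: (eqVneq j A) => [->|neq_jA]; case: (eqVneq A B) => [<-|_]; rewrite ?eqxx //=.
  by rewrite (negPf neq_jA).
by case: (eqVneq j B) => [->|].
Qed.

Lemma set0_state_inj c c' s s' :
  set0_state c s = set0_state c' s' -> s ord0 = s' ord0 -> c = c' /\ s = s'.
Proof.
move=> /ffunP eq_set0 eq0; split; first by have := eq_set0 ord0; rewrite !ffunE eqxx.
by apply/ffunP=> j; have := eq_set0 j; rewrite !ffunE; case: eqVneq => [->|].
Qed.

(* Exchanges are invertible, and [SetZero c] is undone once the overwritten
   entry is known, c itself being visible at level 0. *)
Lemma run_forgotten_inj ops ops' s s' :
  map op_shape ops = map op_shape ops' -> run s ops = run s' ops' ->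
  forgotten s ops = forgotten s' ops' -> s = s' /\ ops = ops'.
Proof.
elim: ops ops' s s' => [|o ops IH] [|o' ops'] //= s s' [eq_shape /IH{}IH].
case: o o' eq_shape => [c|a b] [c'|a' b'] //= => [_ | [-> ->]] /IH{}IH.
  by move=> [eq0 /IH [/set0_state_inj/(_ eq0) [-> ->] ->]].
by move=> /IH [/(can_inj (exch_stateK _ _)) -> ->].
Qed.

Lemma forgotten_cat s ops ops' :
  forgotten s (ops ++ ops') = forgotten s ops ++ forgotten (run s ops) ops'.
Proof. by elim: ops s => //= -[c|a b] ops IH s; rewrite IH. Qed.

Lemma forgotten_take_Swap s a b d : forgotten s (take d (Swap_ops m a b)) = [::].
Proof.
rewrite /Swap_ops -map_take.
by elim: (take _ _) s => //= p ps IH s; apply: IH.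
Qed.

End Runs.

Lemma consecutive_scanl (T : eqType) U (f : T -> U -> T) (x : T) (us : seq U) y y' :
  let p := x :: scanl f x us in (y, y') \in zip p (behead p) ->
  let t := index (y, y') (zip p (behead p)) in t < size us /\ foldl f x (take t us) = y.
Proof.
move=> p yy'_in t.
have size_zip_p : size (zip p (behead p)) = size us.
  by rewrite size_zip /= size_scanl; lia.
have t_lt : t < size us by rewrite -size_zip_p index_mem.
split=> //; have := nth_index (y, y) yy'_in; rewrite nth_zip_cond -/t index_mem yy'_in.
case=> <- _; rewrite /p; case: t t_lt => [|t] t_lt /=; first by rewrite take0.
by rewrite nth_scanl // ltnW.
Qed.

Lemma size_swap_pairs fuel a b K : b - a <= 2 ^ K -> size (swap_pairs fuel a b) <= 3 ^ K.
Proof.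
elim: fuel a b K => [|fuel IH] a b K //=.
case: ifP => [_ _|gt1]; first by rewrite expn_gt0.
case: K => [|K]; first by rewrite expn0; lia.
rewrite !size_cat -divn2 !expnS => le_ba.
have := IH a ((a + b) %/ 2) K; have := IH ((a + b) %/ 2) b K; lia.
Qed.

Lemma size_Swap_ops m i K : i <= 2 ^ K -> size (Swap_ops m 0 i) <= 3 ^ K.
Proof. by move=> le_i; rewrite size_map; apply: size_swap_pairs; rewrite subn0. Qed.

Section Gamma.

Variables (L m : nat) (kstar : 'I_m) (i : 'I_L.+1).
Implicit Types (lam : state L m) (k : 'I_m).
Local Notation E := (Swap_ops m 0 i).

Definition gamma_midstate lam : state L m := run (set0_state kstar lam) E.

(* Before [SetZero k] the prefix has forgotten at most lambda_0 and does not
   involve k; afterwards k is read off the operations, and the forgotten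
   entries are lambda_0 and the level-0 entry of the midstate. *)
Definition gamma_key lam k t : 'I_m * 'I_m :=
  (lam ord0, if t <= (size E).+1 then k else gamma_midstate lam ord0).

Lemma size_gamma_ops lam k : size (gamma_ops kstar lam i k) = 2 * size E + 3.
Proof. by rewrite /gamma_ops !size_cat /=; lia. Qed.

Lemma gamma_ops_shape lam lam' k k' :
  map op_shape (gamma_ops kstar lam i k) = map op_shape (gamma_ops kstar lam' i k').
Proof. by rewrite /gamma_ops !map_cat. Qed.

Lemma nth_gamma_ops_mid lam k :
  nth (SetZero kstar) (gamma_ops kstar lam i k) (size E).+1 = SetZero k.
Proof. by rewrite /= nth_cat ltnn subnn. Qed.

Lemma forgotten_gamma lam k t : t < size (gamma_ops kstar lam i k) ->
  forgotten lam (take t (gamma_ops kstar lam i k)) =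
  if t is 0 then [::]
  else if t <= (size E).+1 then [:: lam ord0]
  else [:: lam ord0; gamma_midstate lam ord0].
Proof.
rewrite size_gamma_ops; case: t => [|t] //= lt_t; rewrite ltnS take_cat.
case: ltnP => [lt_tE|le_Et].
  by rewrite forgotten_take_Swap ltnW.
rewrite forgotten_cat -{1}(take_size E) forgotten_take_Swap /=.
case def_d: (t - size E) => [|d] /=; first by rewrite (_ : t <= size E) //; lia.
rewrite takel_cat ?forgotten_take_Swap; last by lia.
by rewrite (_ : t <= size E = false) //; lia.
Qed.

Lemma gamma_prefix_inj lam lam' k k' t :
  t < size (gamma_ops kstar lam i k) ->
  run lam (take t (gamma_ops kstar lam i k)) =
    run lam' (take t (gamma_ops kstar lam' i k')) ->
  gamma_key lam k t = gamma_key lam' k' t -> lam = lam' /\ k = k'.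
Proof.
move=> lt_t eq_run [eq0 eq_key].
have lt_t' : t < size (gamma_ops kstar lam' i k').
  by rewrite size_gamma_ops -(size_gamma_ops lam k).
have eq_forgotten : forgotten lam (take t (gamma_ops kstar lam i k)) =
                    forgotten lam' (take t (gamma_ops kstar lam' i k')).
  rewrite !forgotten_gamma // eq0; case: t {lt_t lt_t' eq_run} eq_key => //= t.
  by case: ifP => // _ ->.
have eq_shape : map op_shape (take t (gamma_ops kstar lam i k)) =
                map op_shape (take t (gamma_ops kstar lam' i k')).
  by rewrite !map_take (gamma_ops_shape lam lam' k k').
have [<- eq_ops] := run_forgotten_inj eq_shape eq_run eq_forgotten.
split=> //; case: leqP eq_key => // lt_Et _.
have := congr1 (nth (SetZero kstar)^~ (size E).+1) eq_ops.
by rewrite !nth_take // !nth_gamma_ops_mid => -[].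
Qed.

Variables tau tau' : state L m.

Definition gamma_time lam k : nat :=
  index (tau, tau') (zip (gamma_path kstar lam i k) (behead (gamma_path kstar lam i k))).

Lemma gamma_timeP lam k : occurs_consecutiveb tau tau' (gamma_path kstar lam i k) ->
  gamma_time lam k < 2 * size E + 3 /\
  run lam (take (gamma_time lam k) (gamma_ops kstar lam i k)) = tau.
Proof. by rewrite -(size_gamma_ops lam k); apply: consecutive_scanl. Qed.

Lemma gamma_time_inj lam lam' k k' :
  occurs_consecutiveb tau tau' (gamma_path kstar lam i k) ->
  occurs_consecutiveb tau tau' (gamma_path kstar lam' i k') ->
  gamma_time lam k = gamma_time lam' k' ->
  gamma_key lam k (gamma_time lam k) = gamma_key lam' k' (gamma_time lam' k') ->
  lam = lam' /\ k = k'.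
Proof.
move=> /gamma_timeP [lt_t run_t] /gamma_timeP [_ run_t'] eq_t.
rewrite -eq_t -(size_gamma_ops lam k) in lt_t run_t' *.
by apply: gamma_prefix_inj; rewrite ?run_t.
Qed.

End Gamma.

Lemma card_triples_through_le L m (kstar : 'I_m) (tau tau' : state L m) K :
  L <= 2 ^ K -> #|triples_through kstar tau tau'| <= L.+1 * (2 * 3 ^ K + 3) * (m * m).
Proof.
move=> le_L; pose N := 2 * 3 ^ K + 2.
pose time (x : state L m * 'I_L.+1 * 'I_m) := gamma_time kstar x.1.2 tau tau' x.1.1 x.2.
pose f x : 'I_L.+1 * 'I_N.+1 * ('I_m * 'I_m) :=
  (x.1.2, inord (time x), gamma_key kstar x.1.2 x.1.1 x.2 (time x)).
have f_inj : {in triples_through kstar tau tau' &, injective f}.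
  move=> [[lam i] k] [[lam' i'] k']; rewrite !inE /= => occ occ'.
  move=> /eqP; rewrite xpair_eqE => /andP [/eqP [eq_i eq_t] /eqP eq_key].
  subst i'; have le_E : size (Swap_ops m 0 i) <= 3 ^ K.
    by apply: size_Swap_ops; have := ltn_ord i; lia.
  have lt_N l c : occurs_consecutiveb tau tau' (gamma_path kstar l i c) ->
                  gamma_time kstar i tau tau' l c < N.+1.
    by move=> /gamma_timeP [lt_t _]; rewrite /N; lia.
  move/(congr1 val): eq_t; rewrite /= !inordK ?lt_N // => eq_t.
  by have [-> ->] := gamma_time_inj occ occ' eq_t eq_key.
rewrite -(card_in_imset f_inj); apply: leq_trans (max_card _) _.
by rewrite !card_prod !card_ord -addnS.
Qed.

(* Stdlib's [Reals] rebinds [^] on [nat] to [Nat.pow], as in the statement. *)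
From Stdlib Require Import Reals Lra.

Lemma INR_expn a n : INR (expn a n) = (INR a ^ n)%R.
Proof. by elim: n => [|n IH] //=; rewrite expnS -multE mult_INR IH. Qed.

Lemma pow3_le_Rpower K (x : R) : (2 ^ K <= x)%R -> (3 ^ K <= Rpower x (ln 3 / ln 2))%R.
Proof.
move=> le_x.
have ln_gt0 y : (1 < y)%R -> (0 < ln y)%R.
  by move=> gt1_y; rewrite -ln_1; apply: ln_increasing; lra.
have ln2_gt0 : (0 < ln 2)%R by apply: ln_gt0; lra.
have ln3_gt0 : (0 < ln 3)%R by apply: ln_gt0; lra.
have pow2_gt0 : (0 < 2 ^ K)%R by apply: pow_lt; lra.
have -> : (3 ^ K = Rpower (2 ^ K) (ln 3 / ln 2))%R.
  rewrite -!Rpower_pow; try lra.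
  rewrite Rpower_mult Rmult_comm -Rpower_mult /Rpower ln_exp.
  by congr (exp (_ * _)); field; lra.
apply: Rle_Rpower_l; last lra.
by apply/Rlt_le/Rdiv_lt_0_compat.
Qed.

Lemma triples_bound_le_Rpower (L m K : nat) : expn 2 K <= L.+1 ->
  (INR (L.+1 * (2 * expn 3 K.+1 + 3) * (m * m))
     <= 9 * INR (m ^ 2) * Rpower (INR L.+1) (1 + ln 3 / ln 2))%R.
Proof.
move=> le_L.
have INR2 : INR 2 = 2%R by simpl; lra.
have INR3 : INR 3 = 3%R by simpl; lra.
have pow3 : (3 ^ K <= Rpower (INR L.+1) (ln 3 / ln 2))%R.
  by apply: pow3_le_Rpower; rewrite -INR2 -INR_expn; apply/le_INR/leP.
have pow3_ge1 : (1 <= 3 ^ K)%R by apply: pow_R1_Rle; lra.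
have L_gt0 : (0 < INR L.+1)%R by apply: lt_0_INR; lia.
rewrite Rpower_plus Rpower_1 // pow_INR !mult_INR plus_INR mult_INR INR_expn.
rewrite INR2 INR3 -tech_pow_Rmult.
have sq_m : (0 <= INR m * INR m)%R by nra.
have bound_L : (INR L.+1 * (2 * (3 * 3 ^ K) + 3)
                  <= 9 * (INR L.+1 * Rpower (INR L.+1) (ln 3 / ln 2)))%R by nra.
replace (INR m ^ 2)%R with (INR m * INR m)%R by ring.
nra.
Qed.

Theorem lemma6 :
  exists C : R, (0 < C)%R /\
  forall (L m : nat) (kstar : 'I_m) (tau tau' : state L m),
    (1 <= L)%N -> (1 <= m)%N ->
    (INR #|triples_through kstar tau tau'|
       <= C * INR (m ^ 2) * Rpower (INR L.+1) (1 + ln 3 / ln 2))%R.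
Proof.
exists 9%R; split; first lra.
move=> L m kstar tau tau' L_ge1 _.
have L_lt_pow := ltnW (@trunc_log_ltn 2 L isT).
apply: Rle_trans (le_INR _ _ (elimT leP (card_triples_through_le kstar tau tau' L_lt_pow))) _.
by apply: triples_bound_le_Rpower; apply: leqW; apply: trunc_logP.
Qed.
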